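(* Let $\kappa \le \mathfrak{c}$ be a cardinal with $\mathrm{cf}(\kappa) > \omega$, let $\mathcal{A}$ and $\mathcal{B}$ be almost disjoint families on $\omega$ of size $\kappa$, and let $h : \mathcal{A} \to \mathcal{B}$ be a bijection. If the sets $A = \{|x \cap y| : x, y \in \mathcal{A},\ x \neq y\}$ and $B = \{|x \cap y| : x, y \in \mathcal{B},\ x \neq y\}$ are almost oscillating, then there is $\mathcal{A}' \subseteq \mathcal{A}$ with $|\mathcal{A}'| = \kappa$ such that the restriction $h \restriction \mathcal{A}' : \mathcal{A}' \to h[\mathcal{A}']$ is of dense oscillation.
   Context: An almost disjoint (AD) family on $\omega$ is a family of infinite subsets of $\omega$ any two distinct members of which have finite intersection. Two sets $A, B \subseteq \omega$ are oscillating if for every two-element set $\{x, y\} \subseteq A$ and every two-element set $\{w, z\} \subseteq B$ we have $|y - x| \neq |z - w|$; they are almost oscillating if there is $n \in \omega$ such that $A \setminus n$ and $B \setminus n$ are oscillating. For AD families $\mathcal{C}, \mathcal{D}$ of size $\kappa$, a bijection $g : \mathcal{C} \to \mathcal{D}$ is of dense oscillation if for every $\mathcal{C}' \subseteq \mathcal{C}$ with $|\mathcal{C}'| = \kappa$ there are $x, y, z \in \mathcal{C}'$ such that $|(x \cap z) \setminus (x \cap y)| \neq |(g(x) \cap g(z)) \setminus (g(x) \cap g(y))|$. *)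

From mathcomp Require Import all_boot.
From mathcomp Require Import boolp classical_sets functions cardinality.
Set Implicit Arguments. Unset Strict Implicit. Unset Printing Implicit Defensive.
Local Open Scope classical_set_scope.
Local Open Scope card_scope.

Definition AD_family (F : set (set nat)) : Prop :=
  (forall x, F x -> infinite_set x) /\
  (forall x y, F x -> F y -> x <> y -> finite_set (x `&` y)).

(* { |x cap y| : x, y in F, x <> y } (the intersections are finite in an AD family) *)
Definition intersection_sizes (F : set (set nat)) : set nat :=
  [set n | exists x y, [/\ F x, F y, x <> y & (x `&` y) #= `I_n]].

Definition natdist (m n : nat) : nat := (m - n) + (n - m).

Definition oscillating (A B : set nat) : Prop :=
  forall x y w z, A x -> A y -> x <> y -> B w -> B z -> w <> z ->
    natdist y x <> natdist z w.

(* A \ n, with n = {0,...,n-1} *)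
Definition almost_oscillating (A B : set nat) : Prop :=
  exists n : nat, oscillating (A `\` `I_n) (B `\` `I_n).

Definition dense_oscillation (K : Type) (C D : set (set nat))
  (g : set nat -> set nat) : Prop :=
  forall C', C' `<=` C -> C' #= [set: K] ->
    exists x y z, [/\ C' x, C' y, C' z &
      ~ (((x `&` z) `\` (x `&` y)) #= ((g x `&` g z) `\` (g x `&` g y)))].

(* kappa = |K| has uncountable cofinality: kappa is uncountable and is not
   a countable union of subsets of size < kappa *)
Definition cf_gt_omega (K : Type) : Prop :=
  ~ ([set: K] #<= [set: nat]) /\
  forall X : nat -> set K, (forall n, ~ ([set: K] #<= X n)) ->
    exists k : K, forall n, ~ X n k.

(* Suppose [h] fails to be of dense oscillation on some [C ⊆ A] of size
   kappa, so that |(x∩z)\(x∩y)| = |(hx∩hz)\(hx∩hy)| for all x, y, z in C.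
   Then |x∩z| - |x∩y| = |hx∩hz| - |hx∩hy| for x ≠ y, z.  Since kappa is
   uncountable while an almost disjoint family whose pairwise intersections
   are bounded is countable, some x ∈ C meets other members of C in
   arbitrarily large sets.  Choosing y, z with N ≤ |x∩y| < |x∩z| (and
   |hx∩hy| ≥ N, which the identity forces for |x∩y| large enough) gives two
   pairs, one in A \ N and one in B \ N, at the same distance, contradicting
   almost oscillation.  Hence A' = A already works, and of the hypotheses
   on kappa only its uncountability is needed. *)

From mathcomp Require Import all_boot finmap.
From mathcomp Require Import boolp classical_sets functions cardinality.
From mathcomp Require Import zify.

Set Implicit Arguments. Unset Strict Implicit. Unset Printing Implicit Defensive.
Local Open Scope classical_set_scope.
Local Open Scope card_scope.

(* Junk value 0 on infinite sets. *)
Definition ncard (T : choiceType) (X : set T) : nat := #|` fset_set X|%fset.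

Lemma ncard_setDI (T : choiceType) (A B : set T) :
  finite_set A -> finite_set B -> ncard A = (ncard (A `\` B) + ncard (A `&` B))%N.
Proof. by move=> fA fB; rewrite /ncard fset_setD // fset_setI // addnC cardfsID. Qed.

Lemma card_eq_ncard (T : choiceType) (A : set T) :
  finite_set A -> A #= `I_(ncard A).
Proof. by move=> [n An]; rewrite /ncard (card_fset_set An). Qed.

Lemma ncard_setD_transfer (T U : choiceType) (P Q : set T) (P' Q' : set U) :
  finite_set P -> finite_set Q -> finite_set P' -> finite_set Q' ->
  P `\` Q #= P' `\` Q' -> Q `\` P #= Q' `\` P' ->
  (ncard P + ncard Q' = ncard Q + ncard P')%N.
Proof.
move=> fP fQ fP' fQ' ePQ eQP.
have dPQ : ncard (P `\` Q) = ncard (P' `\` Q').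
  exact/(fcard_eq (finite_setD Q fP) (finite_setD Q' fP')).
have dQP : ncard (Q `\` P) = ncard (Q' `\` P').
  exact/(fcard_eq (finite_setD P fQ) (finite_setD P' fQ')).
rewrite (ncard_setDI fP fQ) (ncard_setDI fQ fP) (ncard_setDI fP' fQ') (ncard_setDI fQ' fP').
rewrite [Q `&` P]setIC [Q' `&` P']setIC; lia.
Qed.

Lemma countable_bounded_intersections (T : countType) (D : set (set T)) (m : nat) :
  (forall x, D x -> infinite_set x) ->
  (forall x y, D x -> D y -> x <> y ->
     finite_set (x `&` y) /\ (ncard (x `&` y) <= m)%N) ->
  countable D.
Proof.
move=> Dinf Dbd.
have /choice[F HF] : forall x, exists B : {fset T},
    D x -> [set` B] `<=` x /\ (m.+1 <= #|` B|)%N%fset.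
  move=> x; have [Dx|nDx] := pselect (D x); last by exists fset0.
  by have [B BA Bn] := infinite_set_fset m.+1 (Dinf x Dx); exists B.
apply/countable_injP; exists (fun x => choice.pickle (F x)).
move=> x y /set_mem Dx /set_mem Dy /(pcan_inj (@choice.pickleK _)) Fxy.
apply: contrapT => nxy.
have [fxy bd] := Dbd x y Dx Dy nxy.
have [Fx Fn] := HF x Dx; have [Fy _] := HF y Dy.
suff : (#|` F x| <= ncard (x `&` y))%N%fset by lia.
apply: fsubset_leq_card; apply/fsubsetP => t tF.
rewrite in_fset_set // inE; split; first exact: Fx.
by apply: Fy; rewrite -Fxy.
Qed.

Lemma uncountable_AD_unbounded_intersections (C : set (set nat)) :
  AD_family C -> ~ countable C ->
  exists2 x, C x & forall m, exists y, [/\ C y, y <> x & (m < ncard (x `&` y))%N].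
Proof.
move=> [Cinf Cfin] Cunc; apply: contrapT => nounb; apply: Cunc.
pose Cm m := [set x | C x /\ forall y, C y -> y <> x -> (ncard (x `&` y) <= m)%N].
have -> : C = \bigcup_(m in [set: nat]) Cm m.
  apply/seteqP; split => [x Cx|x [m _ [] //]].
  have [m Hm] : exists m, forall y, C y -> y <> x -> (ncard (x `&` y) <= m)%N.
    apply: contrapT => unb; apply: nounb; exists x => // m.
    apply: contrapT => nm; apply: unb; exists m => y Cy nyx.
    by rewrite leqNgt; apply/negP => lt; apply: nm; exists y.
  by exists m.
apply: bigcup_countable => // m _.
apply: (@countable_bounded_intersections _ _ m) => [x [/Cinf] //|x y [Cx _] [Cy Hy] nxy].
by split; [exact: Cfin | rewrite setIC; apply: Hy => // /esym].
Qed.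

Lemma intersection_sizes_ncard (F : set (set nat)) x y :
  AD_family F -> F x -> F y -> x <> y -> intersection_sizes F (ncard (x `&` y)).
Proof.
by move=> adF Fx Fy nxy; exists x, y; split => //; apply/card_eq_ncard/adF.2.
Qed.

Lemma oscillating_translate (A B : set nat) a1 a2 b1 b2 :
  oscillating A B -> A a1 -> A a2 -> B b1 -> B b2 ->
  (a1 < a2)%N -> (a1 + b2 = a2 + b1)%N -> False.
Proof.
move=> osc Aa1 Aa2 Bb1 Bb2 lt12 e.
by apply: (osc a1 a2 b1 b2) => //; rewrite /natdist; lia.
Qed.

Section NoDenseOscillation.

Variables (calA calB C : set (set nat)) (h : set nat -> set nat).
Hypotheses (hA : AD_family calA) (hB : AD_family calB)
  (hbij : set_bij calA calB h) (CA : C `<=` calA).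
Hypothesis same_differences : forall x y z, C x -> C y -> C z ->
  (x `&` z) `\` (x `&` y) #= (h x `&` h z) `\` (h x `&` h y).

Lemma image_AD_intersection x y : calA x -> calA y -> x <> y ->
  [/\ calB (h x), calB (h y), h x <> h y & finite_set (h x `&` h y)].
Proof.
move=> Ax Ay nxy; have hAx := set_bij_homo hbij Ax; have hAy := set_bij_homo hbij Ay.
have nhxy : h x <> h y by move/(set_bij_inj hbij); rewrite !inE => /(_ Ax Ay).
by split => //; apply: hB.2.
Qed.

Lemma ncard_intersection_shift x y z : C x -> C y -> C z -> x <> y -> x <> z ->
  (ncard (x `&` z) + ncard (h x `&` h y) = ncard (x `&` y) + ncard (h x `&` h z))%N.
Proof.
move=> Cx Cy Cz nxy nxz; have Ax := CA Cx; have Ay := CA Cy; have Az := CA Cz.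
have [_ _ _ fhxy] := image_AD_intersection Ax Ay nxy.
have [_ _ _ fhxz] := image_AD_intersection Ax Az nxz.
have fxy := hA.2 _ _ Ax Ay nxy; have fxz := hA.2 _ _ Ax Az nxz.
by apply: ncard_setD_transfer => //; apply: same_differences.
Qed.

Lemma uncountable_not_almost_oscillating : ~ countable C ->
  ~ almost_oscillating (intersection_sizes calA) (intersection_sizes calB).
Proof.
move=> Cunc [N osc].
have adC : AD_family C by split => [x /CA/hA.1|x y /CA Ax /CA Ay]; last exact: hA.2.
have [x Cx unb] := uncountable_AD_unbounded_intersections adC Cunc.
have [y0 [Cy0 y0x _]] := unb 0%N.
have [y [Cy yx lty]] := unb (N + ncard (x `&` y0))%N.
have [z [Cz zx ltz]] := unb (ncard (x `&` y)).
have shift0 := ncard_intersection_shift Cx Cy0 Cy (nesym y0x) (nesym yx).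
have shift := ncard_intersection_shift Cx Cy Cz (nesym yx) (nesym zx).
have inA u : C u -> u <> x -> (N <= ncard (x `&` u))%N ->
    (intersection_sizes calA `\` `I_N) (ncard (x `&` u)).
  move=> Cu ux le; split; last by move=> /=; lia.
  exact: intersection_sizes_ncard (CA Cx) (CA Cu) (nesym ux).
have inB u : C u -> u <> x -> (N <= ncard (h x `&` h u))%N ->
    (intersection_sizes calB `\` `I_N) (ncard (h x `&` h u)).
  move=> Cu ux le; split; last by move=> /=; lia.
  have [hAx hAu hxu _] := image_AD_intersection (CA Cx) (CA Cu) (nesym ux).
  exact: intersection_sizes_ncard.
apply: (oscillating_translate osc (inA _ Cy yx _) (inA _ Cz zx _) (inB _ Cy yx _)
          (inB _ Cz zx _) ltz); lia.
Qed.

End NoDenseOscillation.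

Theorem corollary11 (K : Type) (hK : [set: K] #<= [set: set nat])
  (hcf : cf_gt_omega K)
  (calA calB : set (set nat)) (hA : AD_family calA) (hB : AD_family calB)
  (hAK : calA #= [set: K]) (hBK : calB #= [set: K])
  (h : set nat -> set nat) (hbij : set_bij calA calB h) :
  almost_oscillating (intersection_sizes calA) (intersection_sizes calB) ->
  exists calA', [/\ calA' `<=` calA, calA' #= [set: K] &
    set_bij calA' (h @` calA') h /\ dense_oscillation K calA' (h @` calA') h].
Proof.
move=> osc; exists calA; split => //; split; first exact/inj_bij/(set_bij_inj hbij).
move=> C CA CK; apply: contrapT => not_dense.
have same_differences x y z : C x -> C y -> C z ->
    (x `&` z) `\` (x `&` y) #= (h x `&` h z) `\` (h x `&` h y).
  by move=> Cx Cy Cz; apply: contrapT => ne; apply: not_dense; exists x, y, z.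
have C_uncountable : ~ countable C.
  by move=> Ccount; apply: hcf.1; rewrite -(card_le_eql CK).
exact: uncountable_not_almost_oscillating same_differences C_uncountable osc.
Qed.
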